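(* The set $\mathrm{Rec}(N^* )$ of recognizable subsets of $N^*$ is uncountable.
   Context: $N^*$ is the commutative monoid of finite sequences of non-negative integers whose last entry is non-zero (including the empty sequence), with pointwise addition (shorter sequence padded by zeros) and the empty sequence as unit; equivalently the free commutative monoid on countably many generators, isomorphic to $(\mathbb{Z}_{>0},\times,1)$. A subset $S$ of a monoid $M$ is recognizable if there exist a finite monoid $N'$, a monoid morphism $\varphi\colon M \to N'$ and a subset $T \subseteq N'$ with $S = \varphi^{-1}(T)$. *)

From mathcomp Require Import all_boot.
Set Implicit Arguments. Unset Strict Implicit. Unset Printing Implicit Defensive.

Definition nstar_wf (s : seq nat) : bool := nilp s || (last 0 s != 0).

Definition Nstar := {s : seq nat | nstar_wf s}.

Definition addseq (s t : seq nat) : seq nat :=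
  mkseq (fun i => nth 0 s i + nth 0 t i) (maxn (size s) (size t)).

Lemma addseq_wf (s t : seq nat) : nstar_wf s -> nstar_wf t -> nstar_wf (addseq s t).
Proof.
rewrite /nstar_wf /addseq /nilp size_mkseq.
case: (posnP (maxn (size s) (size t))) => [->//|m0] Hs Ht.
apply/orP; right.
rewrite (last_nth 0) size_mkseq.
case E: (maxn (size s) (size t)) m0 => [//|m] _ /=.
rewrite nth_mkseq ?leqnn //.
have [le|lt] := leqP (size t) (size s).
- move: E; rewrite (maxn_idPl le) => E.
  move: Hs; rewrite E /= (last_nth 0) E /=.
  by case: (m.+1 == 0); rewrite ?addn_eq0 => // /negbTE ->.
- move: E; rewrite (maxn_idPr (ltnW lt)) => E.
  move: Ht; rewrite E /= (last_nth 0) E /=.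
  by rewrite addn_eq0 => /negbTE ->; rewrite andbF.
Qed.

Definition nstar_add (x y : Nstar) : Nstar :=
  exist _ (addseq (sval x) (sval y)) (addseq_wf (svalP x) (svalP y)).

Definition nstar_zero : Nstar := exist _ [::] (erefl true).

Record finMonoid := FinMonoid {
  fm_carrier :> finType;
  fm_mul : fm_carrier -> fm_carrier -> fm_carrier;
  fm_one : fm_carrier;
  fm_mulA : forall x y z, fm_mul x (fm_mul y z) = fm_mul (fm_mul x y) z;
  fm_mul1x : forall x, fm_mul fm_one x = x;
  fm_mulx1 : forall x, fm_mul x fm_one = x
}.

Definition nstar_morphism (M : finMonoid) (phi : Nstar -> M) : Prop :=
  phi nstar_zero = fm_one M /\
  forall x y, phi (nstar_add x y) = fm_mul (phi x) (phi y).

Definition recognizable (S : Nstar -> Prop) : Prop :=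
  exists (M : finMonoid) (phi : Nstar -> M) (T : M -> Prop),
    nstar_morphism phi /\ forall x, S x <-> T (phi x).

From mathcomp Require Import all_boot.
From Stdlib Require Import ClassicalEpsilon.

(* For A ⊆ ℕ, the set of x ∈ N^* whose support meets A is the preimage of
   [true] under a morphism to the two-element monoid ([bool], [||]).  The
   generator e_n lies in it iff n ∈ A, so these 2^ℵ₀ recognizable sets are
   pairwise distinct and Cantor's diagonal argument applies. *)

Lemma nth_addseq (s t : seq nat) (i : nat) :
  nth 0 (addseq s t) i = nth 0 s i + nth 0 t i.
Proof.
rewrite /addseq; have [lt_i|ge_i] := ltnP i (maxn (size s) (size t)).
  by rewrite nth_mkseq.
move: ge_i; rewrite geq_max => /andP[ge_s ge_t].
by rewrite !nth_default ?size_mkseq ?geq_max ?ge_s ?ge_t.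
Qed.

Definition support_meets (b : nat -> bool) (s : seq nat) : bool :=
  has (fun i => b i && (nth 0 s i != 0)) (iota 0 (size s)).

Lemma support_meetsP (b : nat -> bool) (s : seq nat) :
  reflect (exists2 i, b i & nth 0 s i != 0) (support_meets b s).
Proof.
apply: (iffP hasP) => [[i _ /andP[]]|[i bi si]]; first by exists i.
exists i; last by rewrite bi.
rewrite mem_iota add0n; apply: contraNT si; rewrite -leqNgt => le_s.
by rewrite nth_default.
Qed.

Lemma support_meets_add (b : nat -> bool) (s t : seq nat) :
  support_meets b (addseq s t) = support_meets b s || support_meets b t.
Proof.
apply/support_meetsP/orP => [[i bi]|].
  by rewrite nth_addseq addn_eq0 negb_and => /orP[] si;
    [left | right]; apply/support_meetsP; exists i.
by case=> /support_meetsP[i bi si]; exists i;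
  rewrite // nth_addseq addn_eq0 negb_and si ?orbT.
Qed.

Definition or_monoid : finMonoid := FinMonoid orbA orFb orbF.

Lemma recognizable_support_meets (b : nat -> bool) :
  recognizable (fun x => support_meets b (sval x)).
Proof.
exists or_monoid, (fun x => support_meets b (sval x)).
exists (fun m : or_monoid => m : Prop).
split=> //; split=> // x y; exact: support_meets_add.
Qed.

Lemma nstar_wf_gen (n : nat) : nstar_wf (rcons (nseq n 0) 1).
Proof. by rewrite /nstar_wf last_rcons orbT. Qed.

Definition nstar_gen (n : nat) : Nstar :=
  exist _ (rcons (nseq n 0) 1) (nstar_wf_gen n).

Lemma support_meets_gen (b : nat -> bool) (n : nat) :
  support_meets b (sval (nstar_gen n)) = b n.
Proof.
apply/support_meetsP/idP => [[i bi]|bn]; last first.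
  by exists n; rewrite // nth_rcons size_nseq ltnn eqxx.
rewrite nth_rcons size_nseq nth_nseq.
by case: ltngtP => // <-.
Qed.

Theorem mainTheorem11 :
  ~ exists f : nat -> (Nstar -> Prop),
      forall S : Nstar -> Prop, recognizable S ->
        exists n : nat, forall x : Nstar, f n x <-> S x.
Proof.
move=> [f enum_rec].
pose b n := if excluded_middle_informative (f n (nstar_gen n)) then false else true.
have [n f_n] := enum_rec _ (recognizable_support_meets b).
have := f_n (nstar_gen n); rewrite support_meets_gen /b.
case: excluded_middle_informative => [fn|not_fn] [to_b of_b].
  by have := to_b fn.
exact/not_fn/of_b.
Qed.
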